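(* Let $G=(V,E)$ with weight $\mu$ be an infinite, connected, locally finite weighted graph satisfying condition $(p_0)$. Let $m\ge 3$ and $(p,q)\in G_{5.2}=\{(p,q): p+q=m-1,\ q<0\}$. Then the inequality $\Delta_m u+u^p|\nabla u|^q\le 0$ on $V$ admits no nontrivial positive solution (no volume growth assumption is imposed).
   Context: Setting: $G=(V,E)$ is an infinite, connected, locally finite graph with no loops and no multiple edges; $x\sim y$ means $x$ and $y$ are joined by an edge. A weight is a symmetric function $\mu:V\times V\to[0,\infty)$ with $\mu_{xy}=\mu_{yx}>0$ if and only if $x\sim y$; the vertex measure is $\mu(x)=\sum_{y\sim x}\mu_{xy}$. For $m>1$ and $u:V\to\mathbb R$, $\Delta_m u(x)=\frac{1}{\mu(x)}\sum_{y\sim x}\mu_{xy}|u(y)-u(x)|^{m-2}(u(y)-u(x))$ and $|\nabla u(x)|=\big(\sum_{y\sim x}\frac{\mu_{xy}}{2\mu(x)}(u(y)-u(x))^2\big)^{1/2}$. Condition $(p_0)$: there is a constant $p_0>1$ such that $\mu_{xy}/\mu(x)\ge 1/p_0$ for all $x\sim y$. A nontrivial positive solution of $\Delta_m u+u^p|\nabla u|^q\le 0$ is a non-constant function $u:V\to(0,\infty)$ such that $\Delta_m u(x)+u(x)^p|\nabla u(x)|^q\le 0$ for every $x\in V$, with the conventions $0^0=1$, $0^q=0$ for $q>0$, and, for $q<0$, $|\nabla u(x)|^q=+\infty$ when $|\nabla u(x)|=0$ (so the inequality fails at such $x$). *)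

From Stdlib Require Import Reals Lra List Relations.
Open Scope R_scope.

(* A weighted graph on vertex type V: adjacency relation [adj], finite
   neighbour lists [nb] (local finiteness), and edge weights [mu]. *)
Definition weighted_graph (V : Type) (adj : V -> V -> Prop)
    (nb : V -> list V) (mu : V -> V -> R) : Prop :=
  (forall x y, adj x y -> adj y x) /\
  (forall x, ~ adj x x) /\
  (forall x, NoDup (nb x)) /\
  (forall x y, In y (nb x) <-> adj x y) /\
  (forall x y, mu x y = mu y x) /\
  (forall x y, 0 <= mu x y) /\
  (forall x y, 0 < mu x y <-> adj x y).

Definition infinite_type (V : Type) : Prop :=
  forall l : list V, exists x, ~ In x l.

Definition connected (V : Type) (adj : V -> V -> Prop) : Prop :=
  forall x y, clos_refl_trans V adj x y.

Definition sum_nb {V : Type} (nb : V -> list V) (x : V) (f : V -> R) : R :=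
  fold_right (fun y acc => f y + acc) 0 (nb x).

Definition vmeas {V : Type} (nb : V -> list V) (mu : V -> V -> R) (x : V) : R :=
  sum_nb nb x (fun y => mu x y).

Definition cond_p0 {V : Type} (adj : V -> V -> Prop) (nb : V -> list V)
    (mu : V -> V -> R) : Prop :=
  exists p0 : R, 1 < p0 /\
    forall x y, adj x y -> mu x y / vmeas nb mu x >= 1 / p0.

(* t^a for t >= 0 and a > 0, with 0^a = 0 *)
Definition powp (a t : R) : R := if Rle_dec t 0 then 0 else Rpower t a.

Definition Delta_m {V : Type} (nb : V -> list V) (mu : V -> V -> R) (m : R)
    (u : V -> R) (x : V) : R :=
  / vmeas nb mu x *
  sum_nb nb x (fun y => mu x y * powp (m - 2) (Rabs (u y - u x)) * (u y - u x)).

Definition grad_norm {V : Type} (nb : V -> list V) (mu : V -> V -> R)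
    (u : V -> R) (x : V) : R :=
  sqrt (sum_nb nb x (fun y => mu x y / (2 * vmeas nb mu x) * (u y - u x) ^ 2)).

(* |nabla u(x)|^q with the conventions 0^0 = 1, 0^q = 0 (q>0), and for
   q < 0 the value +oo at |nabla u| = 0 (so the inequality fails there). *)
Definition ineq_at {V : Type} (nb : V -> list V) (mu : V -> V -> R)
    (m p q : R) (u : V -> R) (x : V) : Prop :=
  let g := grad_norm nb mu u x in
  let D := Delta_m nb mu m u x in
  let up := Rpower (u x) p in
  if Rlt_dec q 0 then 0 < g /\ D + up * Rpower g q <= 0
  else if Req_EM_T q 0 then D + up <= 0
  else D + up * powp q g <= 0.

Definition nontrivial_pos_solution {V : Type} (nb : V -> list V)
    (mu : V -> V -> R) (m p q : R) (u : V -> R) : Prop :=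
  (forall x, 0 < u x) /\ (exists x y, u x <> u y) /\
  (forall x, ineq_at nb mu m p q u x).

(* The obstruction is local: no vertex can satisfy the inequality.  At a
   vertex x with a := u x, positivity of u gives u y - u x > -a, whence two
   lower bounds for each term |d|^(m-2) d of the m-Laplacian, namely -a^(m-1)
   and a^(m-3) (d^2 - 2 a^2).  Averaging over the neighbours,
   Delta_m u x >= -a^(m-1) and Delta_m u x >= 2 a^(m-3) (g^2 - a^2) with
   g := |nabla u x|.  If g < a, then since q < 0 the reaction term
   a^p g^q exceeds a^p a^q = a^(m-1); if g >= a, then Delta_m u x >= 0 while
   the reaction term is positive.  Either way the left-hand side is > 0. *)
From Stdlib Require Import Reals List Relations Lra Psatz.
Open Scope R_scope.

Section NeighbourSums.
Variables (V : Type) (nb : V -> list V) (x : V).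

Lemma sum_nb_le (f g : V -> R) :
  (forall y, In y (nb x) -> f y <= g y) -> sum_nb nb x f <= sum_nb nb x g.
Proof.
  unfold sum_nb; induction (nb x) as [|z l IH]; simpl; intros Hfg; [lra|].
  assert (f z <= g z) by (apply Hfg; left; reflexivity).
  assert (fold_right (fun y acc => f y + acc) 0 l <=
          fold_right (fun y acc => g y + acc) 0 l)
    by (apply IH; intros y Hy; apply Hfg; right; exact Hy).
  lra.
Qed.

Lemma sum_nb_ext (f g : V -> R) :
  (forall y, In y (nb x) -> f y = g y) -> sum_nb nb x f = sum_nb nb x g.
Proof.
  intros Hfg; apply Rle_antisym; apply sum_nb_le; intros y Hy; rewrite Hfg; auto; lra.
Qed.

Lemma sum_nb_ge0 (f : V -> R) : (forall y, 0 <= f y) -> 0 <= sum_nb nb x f.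
Proof.
  intros Hf; unfold sum_nb; induction (nb x) as [|z l IH]; simpl; [lra|].
  specialize (Hf z); lra.
Qed.

Lemma sum_nb_linear (f g : V -> R) (b c : R) :
  sum_nb nb x (fun y => b * f y + c * g y) = b * sum_nb nb x f + c * sum_nb nb x g.
Proof. unfold sum_nb; induction (nb x); simpl; [ring | rewrite IHl; ring]. Qed.

Lemma sum_nb_scal (f : V -> R) (c : R) :
  sum_nb nb x (fun y => c * f y) = c * sum_nb nb x f.
Proof. unfold sum_nb; induction (nb x); simpl; [ring | rewrite IHl; ring]. Qed.

End NeighbourSums.

Lemma Rdiv_ge0 (s t : R) : 0 <= s -> 0 <= t -> 0 <= s / t.
Proof.
  intros Hs Ht; destruct (Req_dec t 0) as [-> | Ht0].
  - unfold Rdiv; rewrite Rinv_0; lra.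
  - apply Rmult_le_pos; [exact Hs | left; apply Rinv_0_lt_compat; lra].
Qed.

Lemma Rpower_gt0 (t c : R) : 0 < Rpower t c.
Proof. unfold Rpower; apply exp_pos. Qed.

Lemma powp_gt0 (c t : R) : 0 < t -> powp c t = Rpower t c.
Proof. intros Ht; unfold powp; destruct (Rle_dec t 0); [lra | reflexivity]. Qed.

Lemma Rpower_lt_neg_exponent (s t c : R) :
  c < 0 -> 0 < s < t -> Rpower t c < Rpower s c.
Proof.
  intros Hc Hst.
  replace c with (- - c) by ring; rewrite !(Rpower_Ropp _ (- c)).
  apply Rinv_lt_contravar.
  - apply Rmult_lt_0_compat; apply Rpower_gt0.
  - apply Rlt_Rpower_l; lra.
Qed.

Lemma Rpower_add_int (t c : R) (n : nat) :
  0 < t -> Rpower t (c + INR n) = Rpower t c * t ^ n.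
Proof. intros Ht; rewrite Rpower_plus, Rpower_pow by exact Ht; reflexivity. Qed.

Lemma signed_powp_ge_neg (a d m : R) :
  0 < a -> - a < d -> 2 <= m -> - Rpower a (m - 1) <= powp (m - 2) (Rabs d) * d.
Proof.
  intros Ha Hd Hm.
  assert (Ham := Rpower_gt0 a (m - 1)).
  destruct (Rle_lt_dec 0 d) as [Hd0 | Hd0].
  - unfold powp; destruct (Rle_dec (Rabs d) 0); [lra|].
    assert (0 < Rpower (Rabs d) (m - 2)) by apply Rpower_gt0; nra.
  - rewrite Rabs_left, powp_gt0 by lra.
    assert (Rpower (- d) (m - 2) <= Rpower a (m - 2)) by (apply Rle_Rpower_l; lra).
    replace (m - 1) with (m - 2 + INR 1) by (simpl; ring).
    rewrite Rpower_add_int by lra.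
    assert (0 < Rpower (- d) (m - 2)) by apply Rpower_gt0.
    nra.
Qed.

Lemma signed_powp_ge_quadratic (a d m : R) :
  0 < a -> - a < d -> 3 <= m ->
  Rpower a (m - 3) * (d ^ 2 - 2 * a ^ 2) <= powp (m - 2) (Rabs d) * d.
Proof.
  intros Ha Hd Hm.
  assert (Ha3 := Rpower_gt0 a (m - 3)).
  destruct (Rle_lt_dec d 0) as [Hd0 | Hd0]; [| destruct (Rlt_le_dec d a) as [Hda | Hda]].
  - assert (Hm1 : Rpower a (m - 1) = Rpower a (m - 3) * a ^ 2).
    { replace (m - 1) with (m - 3 + INR 2) by (simpl; ring).
      apply Rpower_add_int; exact Ha. }
    pose proof (signed_powp_ge_neg a d m Ha Hd ltac:(lra)).
    assert (Rpower a (m - 3) * (d ^ 2 - a ^ 2) <= 0)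
      by (assert (0 <= Rpower a (m - 3) * (a ^ 2 - d ^ 2)) by (apply Rmult_le_pos; nra); lra).
    nra.
  - rewrite Rabs_right, powp_gt0 by lra.
    assert (0 < Rpower d (m - 2) * d) by (apply Rmult_lt_0_compat; [apply Rpower_gt0 | lra]).
    assert (0 <= Rpower a (m - 3) * (2 * a ^ 2 - d ^ 2)) by (apply Rmult_le_pos; nra).
    lra.
  - rewrite Rabs_right, powp_gt0 by lra.
    replace (m - 2) with (m - 3 + INR 1) by (simpl; ring).
    rewrite Rpower_add_int by lra.
    assert (Rpower a (m - 3) <= Rpower d (m - 3)) by (apply Rle_Rpower_l; lra).
    nra.
Qed.

Section AtVertex.
Variables (V : Type) (nb : V -> list V) (mu : V -> V -> R).
Hypothesis mu_ge0 : forall x y, 0 <= mu x y.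
Variables (u : V -> R) (x : V).
Hypothesis u_gt0 : forall y, 0 < u y.

Let M := vmeas nb mu x.
Let g := grad_norm nb mu u x.
Let S := sum_nb nb x (fun y => mu x y * (u y - u x) ^ 2).

Lemma vmeas_ge0 : 0 <= M.
Proof. apply sum_nb_ge0; intros y; apply mu_ge0. Qed.

Lemma grad_norm_sq : g ^ 2 = S / (2 * M).
Proof.
  assert (HM := vmeas_ge0); unfold g, S, M in *; unfold grad_norm; rewrite pow2_sqrt.
  - unfold Rdiv; rewrite (Rmult_comm (sum_nb _ _ _)), <- sum_nb_scal.
    apply sum_nb_ext; intros y _; unfold Rdiv; ring.
  - apply sum_nb_ge0; intros y; apply Rmult_le_pos; [| apply pow2_ge_0].
    apply Rdiv_ge0; [apply mu_ge0 | lra].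
Qed.

(* With [/ 0 = 0], a vertex of measure zero has gradient zero. *)
Lemma grad_norm_gt0_vmeas_gt0 : 0 < g -> 0 < M.
Proof.
  intros Hg; destruct vmeas_ge0 as [HM | HM]; [exact HM | exfalso].
  pose proof grad_norm_sq as Hsq.
  rewrite <- HM, Rmult_0_r in Hsq; unfold Rdiv in Hsq; rewrite Rinv_0 in Hsq.
  nra.
Qed.

Lemma vmeas_mul_Delta_m (m : R) :
  0 < M ->
  M * Delta_m nb mu m u x
  = sum_nb nb x (fun y => mu x y * powp (m - 2) (Rabs (u y - u x)) * (u y - u x)).
Proof. intros HM; unfold Delta_m; fold M; field; lra. Qed.

Lemma Delta_m_ge_neg (m : R) :
  2 <= m -> 0 < M -> - Rpower (u x) (m - 1) <= Delta_m nb mu m u x.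
Proof.
  intros Hm HM; apply Rmult_le_reg_l with M; [exact HM |].
  rewrite vmeas_mul_Delta_m by exact HM.
  replace (M * - Rpower (u x) (m - 1))
    with (sum_nb nb x (fun y => - Rpower (u x) (m - 1) * mu x y))
    by (rewrite sum_nb_scal, Rmult_comm; reflexivity).
  apply sum_nb_le; intros y _.
  pose proof (signed_powp_ge_neg (u x) (u y - u x) m (u_gt0 x)
                ltac:(pose proof (u_gt0 y); lra) Hm).
  pose proof (mu_ge0 x y); nra.
Qed.

Lemma Delta_m_ge_grad (m : R) :
  3 <= m -> 0 < M ->
  2 * Rpower (u x) (m - 3) * (g ^ 2 - u x ^ 2) <= Delta_m nb mu m u x.
Proof.
  intros Hm HM; apply Rmult_le_reg_l with M; [exact HM |].
  rewrite vmeas_mul_Delta_m by exact HM.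
  assert (HS : S = 2 * M * g ^ 2) by (rewrite grad_norm_sq; field; lra).
  replace (M * (2 * Rpower (u x) (m - 3) * (g ^ 2 - u x ^ 2)))
    with (sum_nb nb x (fun y => Rpower (u x) (m - 3) * (mu x y * (u y - u x) ^ 2)
                                + (- 2 * Rpower (u x) (m - 3) * u x ^ 2) * mu x y))
    by (rewrite sum_nb_linear; fold S; rewrite HS; change (sum_nb nb x (mu x)) with M; ring).
  apply sum_nb_le; intros y _.
  pose proof (signed_powp_ge_quadratic (u x) (u y - u x) m (u_gt0 x)
                ltac:(pose proof (u_gt0 y); lra) Hm).
  pose proof (mu_ge0 x y); nra.
Qed.

Lemma not_ineq_at (m p q : R) :
  3 <= m -> p + q = m - 1 -> q < 0 -> ~ ineq_at nb mu m p q u x.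
Proof.
  intros Hm Hpq Hq; unfold ineq_at; fold g.
  destruct (Rlt_dec q 0) as [_ | ]; [| lra].
  intros [Hg Hineq].
  assert (HM := grad_norm_gt0_vmeas_gt0 Hg).
  assert (Hreact := Rmult_lt_0_compat _ _ (Rpower_gt0 (u x) p) (Rpower_gt0 g q)).
  destruct (Rlt_le_dec g (u x)) as [Hgu | Hug].
  - pose proof (Delta_m_ge_neg m ltac:(lra) HM).
    assert (Rpower (u x) q < Rpower g q) by (apply Rpower_lt_neg_exponent; lra).
    assert (Rpower (u x) p * Rpower (u x) q = Rpower (u x) (m - 1))
      by (rewrite <- Rpower_plus; f_equal; lra).
    pose proof (Rpower_gt0 (u x) p); nra.
  - pose proof (Delta_m_ge_grad m Hm HM).
    pose proof (Rpower_gt0 (u x) (m - 3)).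
    assert (0 <= g ^ 2 - u x ^ 2) by (pose proof (u_gt0 x); nra).
    nra.
Qed.

End AtVertex.

Theorem mainTheorem6 (V : Type) (adj : V -> V -> Prop) (nb : V -> list V)
    (mu : V -> V -> R) (m p q : R) :
  weighted_graph V adj nb mu ->
  infinite_type V ->
  connected V adj ->
  cond_p0 adj nb mu ->
  3 <= m ->
  p + q = m - 1 ->
  q < 0 ->
  ~ exists u : V -> R, nontrivial_pos_solution nb mu m p q u.
Proof.
  intros (_ & _ & _ & _ & _ & mu_ge0 & _) _ _ _ Hm Hpq Hq
         (u & u_gt0 & (x & _) & Hsol).
  exact (not_ineq_at V nb mu mu_ge0 u x u_gt0 m p q Hm Hpq Hq (Hsol x)).
Qed.
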